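(* Consider any sequences generated by Algorithm 3 with parameters satisfying $0<\alpha\le\mu/2$ and $\eta\le\frac1{4\tau L}$, and let $\delta:=\min\{1,\frac1{2\eta L}\}$. Then for every $k\ge0$, \[ \frac1\eta\|x^{k+1}-x^*\|^2 \le \frac1\eta\|x^k-x^*\|^2 - \frac{3\alpha}4\|x^{k+1}-x^*\|^2 + \frac{2(1-\tau)}\tau\mathrm{D}_r(x_f^k,x^* ) - \frac{2-\tau}\tau\mathrm{D}_r(x_f^{k+1},x^* ) - \frac{\eta\delta}4\|y^{k+1}-y^*\|^2 + 2\langle y^{k+1}-y^*,x^{k+1}-x^*\rangle. \]
   Context: $F:\mathbb{R}^{nd}\to\mathbb{R}$ is differentiable, $\mu$-strongly convex and $L$-smooth, $0<\mu\le L$. $\mathbf{W}$ is a symmetric positive semidefinite $nd\times nd$ matrix whose kernel is the consensus space $\{(x_1,\dots,x_n)\in(\mathbb{R}^d)^n:x_1=\dots=x_n\}$. $x^*$ is the unique minimizer of $F$ over $\ker(\mathbf{W})$; $y^*:=\nabla F(x^* )-\frac\mu2x^*$, $z^*:=-\nabla F(x^* )$. $r(x):=F(x)-\frac\mu4\|x\|^2$, $h(y,z):=\frac1\mu\|y+z\|^2+\frac\nu2\|y\|^2$. $\mathrm{D}_r(u,v):=r(u)-r(v)-\langle\nabla r(v),u-v\rangle$. Algorithm 3: given $x^0,y^0\in\mathbb{R}^{nd}$, $z^0\in\mathrm{range}(\mathbf{W})$, parameters $\eta,\theta,\lambda,\alpha,\beta,\gamma,\nu>0$, $\tau,\sigma\in(0,1)$,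 set $x_f^0=x^0$, $y_f^0=y^0$, $z_f^0=z^0$, and for $k\ge0$: $x_g^k=\tau x^k+(1-\tau)x_f^k$, $y_g^k=\sigma y^k+(1-\sigma)y_f^k$, $z_g^k=\sigma z^k+(1-\sigma)z_f^k$; $(x^{k+1},y^{k+1})$ satisfies $x^{k+1} = x^k + \eta\alpha(x_g^k-x^{k+1}) - \eta\nabla r(x_g^k) + \eta y^{k+1}$ and $y^{k+1} = y^k + \theta\beta(y_g^k - y^{k+1}) - \theta\nabla_y h(y_g^k,z_g^k) + \theta\nu y^{k+1} - \theta x^{k+1}$; $z^{k+1} = z^k + \lambda\gamma(z_g^k - z^{k+1}) - \lambda\mathbf{W}\nabla_z h(y_g^k,z_g^k)$; $x_f^{k+1}=x_g^k+\frac{2\tau}{2-\tau}(x^{k+1}-x^k)$, $y_f^{k+1}=y_g^k+\sigma(y^{k+1}-y^k)$, $z_f^{k+1}=z_g^k+\sigma(z^{k+1}-z^k)$. *)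

From HB Require Import structures.
From mathcomp Require Import all_boot all_order all_algebra.
From mathcomp Require Import all_classical all_reals all_analysis.
Set Implicit Arguments. Unset Strict Implicit. Unset Printing Implicit Defensive.
Import Order.TTheory GRing.Theory Num.Theory.
Import numFieldNormedType.Exports.
Local Open Scope ring_scope.

(* Vectors of R^{nd} are column vectors 'cV[R]_(n * d); the block
   x = (x_1, ..., x_n) with x_i in R^d has (x_i)_j = x (mxvec_index i j) 0. *)
Notation vec R n d := ('cV[R]_(n * d)).

Definition dotv (R : realType) (m : nat) (u v : 'cV[R]_m) : R :=
  \sum_(i < m) u i 0 * v i 0.
Definition sqnorm (R : realType) (m : nat) (u : 'cV[R]_m) : R := dotv u u.
Definition enorm (R : realType) (m : nat) (u : 'cV[R]_m) : R :=
  Num.sqrt (sqnorm u).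

Definition consensus (R : realType) (n d : nat) (x : vec R n d) : Prop :=
  forall (i i' : 'I_n) (j : 'I_d),
    x (mxvec_index i j) 0 = x (mxvec_index i' j) 0.

Definition is_gradient (R : realType) (m : nat)
  (F : 'cV[R]_m -> R) (gradF : 'cV[R]_m -> 'cV[R]_m) : Prop :=
  forall x, differentiable F x /\ forall h, 'd F x h = dotv (gradF x) h.

Definition strongly_convex (R : realType) (m : nat) (mu : R)
  (F : 'cV[R]_m -> R) : Prop :=
  forall (x y : 'cV[R]_m) (t : R), 0 <= t <= 1 ->
    F (t *: x + (1 - t) *: y) <=
      t * F x + (1 - t) * F y - mu / 2 * t * (1 - t) * sqnorm (x - y).

Definition L_smooth (R : realType) (m : nat) (L : R)
  (gradF : 'cV[R]_m -> 'cV[R]_m) : Prop :=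
  forall x y, enorm (gradF x - gradF y) <= L * enorm (x - y).

Definition rfun (R : realType) (m : nat) (mu : R) (F : 'cV[R]_m -> R) x : R :=
  F x - mu / 4 * sqnorm x.
Definition gradr (R : realType) (m : nat) (mu : R)
  (gradF : 'cV[R]_m -> 'cV[R]_m) x : 'cV[R]_m :=
  gradF x - (mu / 2) *: x.

Definition Dr (R : realType) (m : nat) (mu : R) (F : 'cV[R]_m -> R)
  (gradF : 'cV[R]_m -> 'cV[R]_m) (u v : 'cV[R]_m) : R :=
  rfun mu F u - rfun mu F v - dotv (gradr mu gradF v) (u - v).

Definition hfun (R : realType) (m : nat) (mu nu : R) (y z : 'cV[R]_m) : R :=
  mu^-1 * sqnorm (y + z) + nu / 2 * sqnorm y.
Definition grad_y_h (R : realType) (m : nat) (mu nu : R) (y z : 'cV[R]_m)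
  : 'cV[R]_m := (2 / mu) *: (y + z) + nu *: y.
Definition grad_z_h (R : realType) (m : nat) (mu : R) (y z : 'cV[R]_m)
  : 'cV[R]_m := (2 / mu) *: (y + z).

From HB Require Import structures.
From mathcomp Require Import all_boot all_order all_algebra.
From mathcomp Require Import all_classical all_reals all_analysis.
From mathcomp Require Import ring lra.
Import Order.TTheory GRing.Theory Num.Theory.
Import numFieldNormedType.Exports.
Local Open Scope ring_scope.

(* Theorem 10 is a one-step inequality for the x-block of Algorithm 3; it
   holds for any reference point xs. *)

Set Implicit Arguments.
Unset Strict Implicit.

Section InnerProduct.
Variables (R : realType) (m : nat).
Implicit Types (u v w : 'cV[R]_m) (a : R).

Lemma dotvC u v : dotv u v = dotv v u.
Proof. by apply: eq_bigr => i _; rewrite mulrC. Qed.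

Lemma dotvDl u v w : dotv (u + v) w = dotv u w + dotv v w.
Proof. by rewrite /dotv -big_split; apply: eq_bigr => i _; rewrite mxE mulrDl. Qed.

Lemma dotvNl u w : dotv (- u) w = - dotv u w.
Proof. by rewrite /dotv -sumrN; apply: eq_bigr => i _; rewrite mxE mulNr. Qed.

Lemma dotvZl a u w : dotv (a *: u) w = a * dotv u w.
Proof. by rewrite /dotv mulr_sumr; apply: eq_bigr => i _; rewrite mxE mulrA. Qed.

Lemma dotvDr u v w : dotv w (u + v) = dotv w u + dotv w v.
Proof. by rewrite dotvC dotvDl !(dotvC w). Qed.

Lemma dotvNr u w : dotv w (- u) = - dotv w u.
Proof. by rewrite dotvC dotvNl dotvC. Qed.

Lemma dotvZr a u w : dotv w (a *: u) = a * dotv w u.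
Proof. by rewrite dotvC dotvZl dotvC. Qed.

Lemma sqnorm_ge0 u : 0 <= sqnorm u.
Proof. by apply: sumr_ge0 => i _; rewrite -expr2 sqr_ge0. Qed.

Lemma enorm_sq u : enorm u ^+ 2 = sqnorm u.
Proof. by rewrite /enorm sqr_sqrtr // sqnorm_ge0. Qed.

End InnerProduct.

Definition dotvE := (dotvDl, dotvDr, dotvNl, dotvNr, dotvZl, dotvZr).

Section Norms.
Variables (R : realType) (m : nat).
Implicit Types (u v w h : 'cV[R]_m) (a : R).

Lemma sqnormN u : sqnorm (- u) = sqnorm u.
Proof. by rewrite /sqnorm dotvNl dotvNr opprK. Qed.

Lemma sqnormZ a u : sqnorm (a *: u) = a ^+ 2 * sqnorm u.
Proof. by rewrite /sqnorm dotvZl dotvZr mulrA expr2. Qed.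

Lemma sqnormB u v : sqnorm (u - v) = sqnorm u - 2 * dotv u v + sqnorm v.
Proof. by rewrite /sqnorm !dotvE (dotvC v u); ring. Qed.

Lemma dotv_bound (k : R) u h : 0 < k -> sqnorm u <= k ^+ 2 * sqnorm h ->
  `|dotv u h| <= k * sqnorm h.
Proof.
move=> k_gt0 Hu; have Em := sqnorm_ge0 (u - k *: h).
have Ep := sqnorm_ge0 (u + k *: h).
rewrite /sqnorm !dotvE (dotvC h u) in Em Ep; rewrite /sqnorm expr2 in Hu.
have : k * dotv u h <= k * (k * dotv h h) by nra.
have : k * (- (k * dotv h h)) <= k * dotv u h by nra.
by rewrite !ler_pM2l // ler_norml => -> ->.
Qed.

Lemma sqnorm_sum3_le u v w :
  sqnorm (u + v + w) <= 2 * sqnorm u + 4 * sqnorm v + 4 * sqnorm w.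
Proof.
have E : 2 * sqnorm u + 4 * sqnorm v + 4 * sqnorm w - sqnorm (u + v + w)
   = sqnorm (u - v - w) + 2 * sqnorm (v - w).
  by rewrite /sqnorm !dotvE (dotvC v u) (dotvC w u) (dotvC w v); ring.
by have := sqnorm_ge0 (u - v - w); have := sqnorm_ge0 (v - w); lra.
Qed.

End Norms.

Lemma line_derive (R : realType) (m : nat) (F : 'cV[R]_m -> R) (h v : 'cV[R]_m)
  (t0 : R) : differentiable F (t0 *: h + v) ->
  is_derive t0 1 (fun t : R => F (t *: h + v)) ('d F (t0 *: h + v) h).
Proof.
move=> dF.
(* The difference quotients of the line restriction at t0 are those of F at
   t0 h + v in direction h. *)
have E : (fun s : R => s^-1 *: (((fun t : R => F (t *: h + v)) \o shift t0) (s *: 1)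
                                 - F (t0 *: h + v)))
  = (fun s : R => s^-1 *: ((F \o shift (t0 *: h + v)) (s *: h) - F (t0 *: h + v))).
  apply/funext => s /=; congr (_ *: (F _ - _)).
  by rewrite /shift /= [s%:A]mulr1 scalerDl addrA.
apply: DeriveDef; first by rewrite /derivable E; exact: diff_derivable.
by rewrite /derive E -/(derive F _ h) deriveE.
Qed.

Lemma le0_of_scaled_bound (R : realFieldType) (X K : R) : 0 <= K ->
  (forall t, 0 < t -> t <= 1 -> X <= t * K) -> X <= 0.
Proof.
move=> K_ge0 HX; rewrite leNgt; apply/negP => X_gt0.
have XK_gt0 : 0 < X + K by lra.
have t_le1 : X / (X + K) <= 1 by rewrite ler_pdivrMr // mul1r; lra.
have := HX _ (divr_gt0 X_gt0 XK_gt0) t_le1.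
rewrite mulrAC ler_pdivlMr //; nra.
Qed.

Section Taylor.
Variables (R : realType) (m : nat) (F : 'cV[R]_m -> R) (gF : 'cV[R]_m -> 'cV[R]_m).
Hypothesis gF_grad : is_gradient F gF.
Implicit Types (h v : 'cV[R]_m).

Lemma mvt_line (a b s : R) h v : 0 < s ->
  exists2 c, 0 < c < s &
    F (s *: h + v) - F v - (a * s + b * s ^+ 2) =
    (dotv (gF (c *: h + v)) h - (a + 2 * b * c)) * s.
Proof.
move=> s_gt0.
pose psi := (fun t : R => F (t *: h + v))
            - (a \*: (@id R) + b \*: ((@id R) * (@id R))).
have psi_derive (t : R) : is_derive t 1 psi (dotv (gF (t *: h + v)) h - (a + 2 * b * t)).
  have [dF dFE] := gF_grad (t *: h + v).
  have hq : is_derive t (1 : R) (a \*: (@id R) + b \*: ((@id R) * (@id R)))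
                     (a *: 1 + b *: (id t *: 1 + id t *: 1)).
    by apply: is_deriveD; apply: is_deriveZ.
  rewrite (_ : a + 2 * b * t = a + b * (t + t)); last by ring.
  by have := is_deriveB (line_derive dF) hq; rewrite dFE /GRing.scale /= !mulr1.
have psi_cont : {within [set` `[0, s]%R], continuous psi}%classic.
  apply: derivable_within_continuous => t _; exact: (@ex_derive _ _ _ _ _ _ _ (psi_derive t)).
have [c c_in E] := MVT s_gt0 (fun t _ => psi_derive t) psi_cont.
exists c; first by move: c_in; rewrite in_itv.
have psiE (t : R) : psi t = F (t *: h + v) - (a * t + b * t ^+ 2).
  by rewrite expr2.
move: E; rewrite !psiE scale0r add0r subr0 => <-.
by rewrite mulr0 expr0n /= mulr0 addr0 subr0 addrAC.
Qed.

Variable L : R.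
Hypotheses (gF_smooth : L_smooth L gF) (L_gt0 : 0 < L).

Lemma grad_increment_bound (c : R) h v : 0 < c ->
  `|dotv (gF (c *: h + v) - gF v) h| <= L * c * sqnorm h.
Proof.
move=> c_gt0; apply: dotv_bound; first by rewrite mulr_gt0.
have := gF_smooth (c *: h + v) v; rewrite addrK => Hlip.
have Hsq : sqnorm (gF (c *: h + v) - gF v) <= L ^+ 2 * sqnorm (c *: h).
  rewrite -!enorm_sq; have := sqrtr_ge0 (sqnorm (gF (c *: h + v) - gF v)).
  have := sqrtr_ge0 (sqnorm (c *: h)); rewrite -/(enorm _) -/(enorm _); nra.
by rewrite sqnormZ mulrA -exprMn in Hsq.
Qed.

Lemma taylor_bound (t : R) h v : 0 < t ->
  `|F (t *: h + v) - F v - t * dotv (gF v) h| <= L / 2 * t ^+ 2 * sqnorm h.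
Proof.
move=> t_gt0; rewrite ler_norml.
have mvt b := mvt_line (dotv (gF v) h) b h v t_gt0.
have [c /andP [c_gt0 _] Eup] := mvt (L / 2 * sqnorm h).
have [c' /andP [c'_gt0 _] Elo] := mvt (- (L / 2 * sqnorm h)).
move: (grad_increment_bound h v c_gt0) (grad_increment_bound h v c'_gt0).
rewrite !dotvE !ler_norml => /andP [_ Hc] /andP [Hc' _].
apply/andP; split; nra.
Qed.

Lemma descent u v : F u - F v - dotv (gF v) (u - v) <= L / 2 * sqnorm (u - v).
Proof.
have := taylor_bound (u - v) v ltr01; rewrite ler_norml scale1r subrK mul1r.
by rewrite expr1n mulr1 => /andP [_].
Qed.

Variable mu : R.
Hypotheses (convexF : strongly_convex mu F) (mu_gt0 : 0 < mu).

Lemma strong_convexity_first_order u v :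
  mu / 2 * sqnorm (u - v) <= F u - F v - dotv (gF v) (u - v).
Proof.
set h := u - v; set N := sqnorm h.
suff : mu / 2 * N + dotv (gF v) h - (F u - F v) <= 0 by lra.
apply: (le0_of_scaled_bound (K := (L / 2 + mu / 2) * N)) => [|t t_gt0 t_le1].
  by rewrite mulr_ge0 ?sqnorm_ge0 // addr_ge0 // divr_ge0 // ltW.
have Hchord := convexF u v (t := t) ltac:(lra).
have Hline : t *: u + (1 - t) *: v = t *: h + v.
  by rewrite /h scalerBr scalerBl scale1r addrA addrC addrA [- _ + _]addrC.
have := taylor_bound h v t_gt0; rewrite ler_norml => /andP [Hlo _].
rewrite Hline -/h -/N in Hchord; rewrite -/N in Hlo.
by rewrite -(ler_pM2l t_gt0); lra.
Qed.

End Taylor.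

Section Bregman.
Variables (R : realType) (m : nat) (mu : R).
Variables (F : 'cV[R]_m -> R) (gF : 'cV[R]_m -> 'cV[R]_m).
Implicit Types u v w : 'cV[R]_m.
Local Notation D := (Dr mu F gF).
Local Notation gr := (gradr mu gF).

Lemma Dr_three_point u v w : dotv (gr v - gr w) (u - v) = D u w - D v w - D u v.
Proof. by rewrite /Dr /gradr !dotvE; ring. Qed.

Lemma Dr_self u : D u u = 0.
Proof. by rewrite /Dr !subrr -(scale0r (0 : 'cV[R]_m)) dotvZr mul0r subrr. Qed.

Lemma Dr_expand u v :
  D u v = F u - F v - dotv (gF v) (u - v) - mu / 4 * sqnorm (u - v).
Proof. by rewrite /Dr /rfun /gradr /sqnorm !dotvE (dotvC v u); field. Qed.

Variable L : R.
Hypotheses (gF_grad : is_gradient F gF) (gF_smooth : L_smooth L gF) (L_gt0 : 0 < L).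
Hypotheses (convexF : strongly_convex mu F) (mu_gt0 : 0 < mu).

Let quarter_mu_sqnorm_ge0 u : 0 <= mu / 4 * sqnorm u.
Proof. by rewrite mulr_ge0 ?sqnorm_ge0 // divr_ge0 // ltW. Qed.

Lemma Dr_lower u v : mu / 4 * sqnorm (u - v) <= D u v.
Proof.
rewrite Dr_expand; have := strong_convexity_first_order gF_grad gF_smooth L_gt0 convexF
  mu_gt0 u v; lra.
Qed.

Lemma Dr_ge0 u v : 0 <= D u v.
Proof. exact: le_trans (quarter_mu_sqnorm_ge0 _) (Dr_lower u v). Qed.

Lemma Dr_upper u v : D u v <= L / 2 * sqnorm (u - v).
Proof.
rewrite Dr_expand; have := descent gF_grad gF_smooth L_gt0 u v.
have := quarter_mu_sqnorm_ge0 (u - v); lra.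
Qed.

Lemma Dr_cocoercive u v : (2 * L)^-1 * sqnorm (gr v - gr u) <= D v u.
Proof.
set q := gr v - gr u; set v' := v - L^-1 *: q.
have Hv' : v' - v = - (L^-1 *: q) by rewrite /v' addrAC subrr add0r.
have E := Dr_three_point v' v u; rewrite Hv' -/q dotvNr dotvZr in E.
have Hup := Dr_upper v' v; rewrite Hv' sqnormN sqnormZ in Hup.
have := Dr_ge0 v' u; have := sqnorm_ge0 q; rewrite /sqnorm in Hup E *.
have -> : (2 * L)^-1 * dotv q q = L^-1 * dotv q q / 2 by field; rewrite gt_eqF.
have EL : L / 2 * (L^-1 ^+ 2 * dotv q q) = L^-1 * dotv q q / 2.
  by field; rewrite gt_eqF.
lra.
Qed.

End Bregman.

Section AlgorithmStep.
Variables (R : realType) (m : nat) (mu L : R).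
Variables (F : 'cV[R]_m -> R) (gF : 'cV[R]_m -> 'cV[R]_m).
Variables (eta alpha tau : R) (xs x0 x1 xg xf0 xf1 y1 : 'cV[R]_m).
Local Notation D := (Dr mu F gF).
Local Notation gr := (gradr mu gF).

Hypotheses (eta_gt0 : 0 < eta) (tau_gt0 : 0 < tau) (tau_lt1 : tau < 1).
Hypothesis step_xg : xg = tau *: x0 + (1 - tau) *: xf0.
Hypothesis step_x : x1 = x0 + (eta * alpha) *: (xg - x1) - eta *: gr xg + eta *: y1.
Hypothesis step_xf : xf1 = xg + (2 * tau / (2 - tau)) *: (x1 - x0).

(* Errors with respect to the reference point xs and its dual ys = grad r(xs). *)
Local Notation e0 := (x0 - xs).
Local Notation e1 := (x1 - xs).
Local Notation eg := (xg - xs).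
Local Notation dx := (x1 - x0).
Local Notation g := (gr xg - gr xs).
Local Notation ey := (y1 - gr xs).

Let eta_neq0 : eta != 0. Proof. exact: lt0r_neq0. Qed.
Let tau_neq0 : tau != 0. Proof. exact: lt0r_neq0. Qed.
Let two_tau_neq0 : 2 - tau != 0. Proof. apply: lt0r_neq0; have := tau_lt1; lra. Qed.

Lemma primal_step : dx = eta *: (alpha *: (eg - e1) - g + ey).
Proof. by rewrite {1}step_x; apply/matrixP => i j; rewrite !mxE; ring. Qed.

Lemma dual_error : ey = eta^-1 *: dx - alpha *: (eg - e1) + g.
Proof.
rewrite primal_step scalerA mulVf // scale1r.
by apply/matrixP => i j; rewrite !mxE; ring.
Qed.

Lemma error_decomposition :
  tau *: e1 = tau *: eg - (1 - tau) *: (xf0 - xg) + ((2 - tau) / 2) *: (xf1 - xg).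
Proof. by rewrite step_xf step_xg; apply/matrixP => i j; rewrite !mxE; field. Qed.

Lemma extrapolation_step : xf1 - xg = (2 * tau / (2 - tau)) *: dx.
Proof. by rewrite step_xf addrAC subrr add0r. Qed.

(* The terms outside the parenthesis are
   those of Theorem 10; the bounds below show that the parenthesised
   remainder is at most -(3 alpha/4) ||e1||^2 - (eta delta/4) ||ey||^2. *)
Lemma energy_identity :
  eta^-1 * sqnorm e1 =
    eta^-1 * sqnorm e0
    + (2 * (1 - tau) / tau) * D xf0 xs - ((2 - tau) / tau) * D xf1 xs
    + 2 * dotv ey e1
    + (- eta^-1 * sqnorm dx + alpha * (sqnorm eg - sqnorm e1 - sqnorm (eg - e1))
       - D xg xs - 2 * D xs xg
       - (2 * (1 - tau) / tau) * D xf0 xg + ((2 - tau) / tau) * D xf1 xg).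
Proof.
have -> : e0 = e1 - dx by apply/matrixP => i j; rewrite !mxE; ring.
have T0 : dotv g (xf0 - xg) = D xf0 xs - D xg xs - D xf0 xg := Dr_three_point _ _ _ _ _ _.
have T1 : dotv g (xf1 - xg) = D xf1 xs - D xg xs - D xf1 xg := Dr_three_point _ _ _ _ _ _.
have Tg : dotv g eg = D xg xs + D xs xg.
  have := Dr_three_point mu F gF xs xg xs; rewrite Dr_self -[xs - xg]opprB dotvNr.
  by move=> /eqP; rewrite sub0r -opprD eqr_opp => /eqP.
move: primal_step error_decomposition T0 T1 Tg.
move: (x1 - xs) (x1 - x0) (xg - xs) g ey (xf0 - xg) (xf1 - xg).
move=> E1 DX EG G EY U0 U1 Hdx Hdec T0 T1 Tg.
have HDX : dotv DX E1 = eta * (alpha * (dotv EG E1 - sqnorm E1) - dotv G E1 + dotv EY E1).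
  by rewrite Hdx /sqnorm !dotvE.
have HG : tau * dotv G E1 = tau * dotv G EG - (1 - tau) * dotv G U0
                             + (2 - tau) / 2 * dotv G U1.
  by rewrite -dotvZr Hdec !dotvE.
rewrite !sqnormB (dotvC E1) HDX -[dotv G E1](mulKf tau_neq0) HG T0 T1 Tg.
by field; rewrite tau_neq0 eta_neq0.
Qed.

Hypotheses (gF_grad : is_gradient F gF) (gF_smooth : L_smooth L gF).
Hypotheses (convexF : strongly_convex mu F) (mu_gt0 : 0 < mu) (mu_le_L : mu <= L).
Hypotheses (alpha_gt0 : 0 < alpha) (alpha_le : alpha <= mu / 2).
Hypothesis eta_le : eta <= (4 * tau * L)^-1.
Variable delta : R.
Hypotheses (delta_ge0 : 0 <= delta) (delta_le1 : delta <= 1).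
Hypothesis delta_le : delta <= (2 * eta * L)^-1.

Let L_gt0 : 0 < L. Proof. exact: lt_le_trans mu_gt0 mu_le_L. Qed.

Let eta_tau_L : eta * (4 * tau * L) <= 1.
Proof. by rewrite -ler_pdivlMr ?mul1r // !mulr_gt0. Qed.

(* The extrapolated point xf1 stays close to xg, so the divergence created by
   extrapolation is paid for by half of the kinetic term ||x1 - x0||^2 / eta. *)
Lemma extrapolation_bound : ((2 - tau) / tau) * D xf1 xg <= (2 * eta)^-1 * sqnorm dx.
Proof.
have := tau_lt1; have := tau_gt0; have := eta_tau_L => etL t0 t1.
have c1_ge0 : 0 <= (2 - tau) / tau by rewrite divr_ge0 //; lra.
have Hup := Dr_upper gF_grad gF_smooth L_gt0 mu_gt0 xf1 xg.
rewrite extrapolation_step sqnormZ in Hup.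
have E : (2 - tau) / tau * (L / 2 * ((2 * tau / (2 - tau)) ^+ 2 * sqnorm dx))
         = 2 * tau * L / (2 - tau) * sqnorm dx by field; rewrite tau_neq0 two_tau_neq0.
have Hk : 2 * tau * L / (2 - tau) <= (2 * eta)^-1.
  have Hk1 : 2 * tau * L / (2 - tau) <= 2 * tau * L.
    rewrite ler_pdivrMr; last by lra.
    have : 0 < tau * L by rewrite mulr_gt0.
    nra.
  apply: le_trans Hk1 _; rewrite -[(2 * eta)^-1]mul1r ler_pdivlMr ?mulr_gt0 //; lra.
apply: le_trans (ler_wpM2l c1_ge0 Hup) _; rewrite E.
by rewrite ler_wpM2r ?sqnorm_ge0.
Qed.

(* The dual error y1 - ys is controlled by the kinetic term, the distance
   between xg and x1, and (through co-coercivity) the divergence D xs xg. *)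
Lemma dual_bound :
  eta * delta / 4 * sqnorm ey <= (2 * eta)^-1 * sqnorm dx + alpha * sqnorm (eg - e1) + D xs xg.
Proof.
have := alpha_le; have := mu_le_L; have := delta_le1; have := alpha_gt0 => a0 d1 muL amu.
have Hw := sqnorm_sum3_le (eta^-1 *: dx) (- (alpha *: (eg - e1))) g.
rewrite -dual_error sqnormN !sqnormZ in Hw.
have Hco := Dr_cocoercive gF_grad gF_smooth L_gt0 convexF mu_gt0 xg xs.
rewrite -sqnormN opprB in Hco.
have ed_ge0 : 0 <= eta * delta by rewrite mulr_ge0 // ltW.
have ed_le : eta * delta <= (2 * L)^-1.
  have -> : (2 * L)^-1 = eta * (2 * eta * L)^-1 by field; rewrite eta_neq0 lt0r_neq0.
  by rewrite ler_wpM2l // ltW.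
have ed_alpha : eta * delta * alpha ^+ 2 <= alpha.
  apply: le_trans (ler_wpM2r (sqr_ge0 alpha) ed_le) _.
  rewrite mulrC ler_pdivrMr ?mulr_gt0 // expr2; nra.
have := ler_wpM2l (divr_ge0 ed_ge0 (ler0n _ 4)) Hw.
have -> : eta * delta / 4 * (2 * (eta^-1 ^+ 2 * sqnorm dx)
            + 4 * (alpha ^+ 2 * sqnorm (eg - e1)) + 4 * sqnorm g)
          = delta * ((2 * eta)^-1 * sqnorm dx)
            + eta * delta * alpha ^+ 2 * sqnorm (eg - e1) + eta * delta * sqnorm g.
  by field.
have B1 : delta * ((2 * eta)^-1 * sqnorm dx) <= (2 * eta)^-1 * sqnorm dx.
  by rewrite ler_piMl // mulr_ge0 ?sqnorm_ge0 // invr_ge0 mulr_ge0 // ltW.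
have B2 := ler_wpM2r (sqnorm_ge0 (eg - e1)) ed_alpha.
have B3 := ler_wpM2r (sqnorm_ge0 g) ed_le.
lra.
Qed.

(* Strong convexity of r controls the distance from xg to xs. *)
Lemma primal_bound : alpha * sqnorm eg <= D xg xs + D xs xg.
Proof.
have := alpha_le => amu.
have H1 := Dr_lower gF_grad gF_smooth L_gt0 convexF mu_gt0 xg xs.
have H2 := Dr_lower gF_grad gF_smooth L_gt0 convexF mu_gt0 xs xg.
rewrite -opprB sqnormN in H2.
have := ler_wpM2r (sqnorm_ge0 eg) amu; lra.
Qed.

Lemma step_inequality :
  eta^-1 * sqnorm e1 <=
    eta^-1 * sqnorm e0
    - (3 * alpha / 4) * sqnorm e1
    + (2 * (1 - tau) / tau) * D xf0 xs
    - ((2 - tau) / tau) * D xf1 xs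
    - (eta * delta / 4) * sqnorm ey
    + 2 * dotv ey e1.
Proof.
have := tau_lt1; have := tau_gt0; have := alpha_gt0 => a0 t0 t1.
have c0_ge0 : 0 <= 2 * (1 - tau) / tau by rewrite divr_ge0 //; lra.
have := mulr_ge0 c0_ge0 (Dr_ge0 gF_grad gF_smooth L_gt0 convexF mu_gt0 xf0 xg).
have := mulr_ge0 (ltW a0) (sqnorm_ge0 e1).
have half_inv : (2 * eta)^-1 = eta^-1 / 2 by rewrite invfM mulrC.
have := extrapolation_bound; have := dual_bound; rewrite half_inv.
have := primal_bound; rewrite energy_identity; lra.
Qed.

End AlgorithmStep.

Unset Implicit Arguments.
Set Strict Implicit.

Theorem mainTheorem10 (R : realType) (n d : nat) (mu L : R)
  (F : 'cV[R]_(n * d) -> R) (gradF : 'cV[R]_(n * d) -> 'cV[R]_(n * d))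
  (W : 'M[R]_(n * d))
  (xs : 'cV[R]_(n * d))
  (eta theta lambda alpha beta gamma nu tau sigma : R)
  (x y z xf yf zf xg yg zg : nat -> 'cV[R]_(n * d)) :
  (* standing assumptions on F *)
  0 < mu -> mu <= L ->
  is_gradient F gradF ->
  strongly_convex mu F ->
  L_smooth L gradF ->
  (* W symmetric positive semidefinite with kernel = consensus space *)
  W^T = W ->
  (forall v : 'cV[R]_(n * d), 0 <= (v^T *m W *m v) 0 0) ->
  (forall v : 'cV[R]_(n * d), W *m v = 0 <-> consensus v) ->
  (* x* is the unique minimizer of F over ker W *)
  W *m xs = 0 ->
  (forall v, W *m v = 0 -> F xs <= F v) ->
  (forall v, W *m v = 0 -> (forall w, W *m w = 0 -> F v <= F w) -> v = xs) ->
  (* parameters *)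
  0 < eta -> 0 < theta -> 0 < lambda -> 0 < alpha -> 0 < beta ->
  0 < gamma -> 0 < nu -> 0 < tau < 1 -> 0 < sigma < 1 ->
  (* initialization *)
  (exists w, z 0%N = W *m w) ->
  xf 0%N = x 0%N -> yf 0%N = y 0%N -> zf 0%N = z 0%N ->
  (* Algorithm 3 *)
  (forall k, xg k = tau *: x k + (1 - tau) *: xf k) ->
  (forall k, yg k = sigma *: y k + (1 - sigma) *: yf k) ->
  (forall k, zg k = sigma *: z k + (1 - sigma) *: zf k) ->
  (forall k, x k.+1 = x k + (eta * alpha) *: (xg k - x k.+1)
                       - eta *: gradr mu gradF (xg k) + eta *: y k.+1) ->
  (forall k, y k.+1 = y k + (theta * beta) *: (yg k - y k.+1)
                       - theta *: grad_y_h mu nu (yg k) (zg k)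
                       + (theta * nu) *: y k.+1 - theta *: x k.+1) ->
  (forall k, z k.+1 = z k + (lambda * gamma) *: (zg k - z k.+1)
                       - lambda *: (W *m grad_z_h mu (yg k) (zg k))) ->
  (forall k, xf k.+1 = xg k + (2 * tau / (2 - tau)) *: (x k.+1 - x k)) ->
  (forall k, yf k.+1 = yg k + sigma *: (y k.+1 - y k)) ->
  (forall k, zf k.+1 = zg k + sigma *: (z k.+1 - z k)) ->
  (* hypotheses of the theorem *)
  alpha <= mu / 2 ->
  eta <= (4 * tau * L)^-1 ->
  let delta := Num.min 1 ((2 * eta * L)^-1) in
  let ys := gradF xs - (mu / 2) *: xs in
  forall k : nat,
    eta^-1 * sqnorm (x k.+1 - xs) <=
      eta^-1 * sqnorm (x k - xs)
      - (3 * alpha / 4) * sqnorm (x k.+1 - xs)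
      + (2 * (1 - tau) / tau) * Dr mu F gradF (xf k) xs
      - ((2 - tau) / tau) * Dr mu F gradF (xf k.+1) xs
      - (eta * delta / 4) * sqnorm (y k.+1 - ys)
      + 2 * dotv (y k.+1 - ys) (x k.+1 - xs).
Proof.
move=> mu_gt0 mu_le_L gF_grad convexF gF_smooth _ _ _ _ _ _ eta_gt0 _ _ alpha_gt0 _ _ _
  /andP [tau_gt0 tau_lt1] _ _ _ _ _ step_xg _ _ step_x _ _ step_xf _ _
  alpha_le eta_le delta ys k.
have L_gt0 : 0 < L := lt_le_trans mu_gt0 mu_le_L.
have delta_ge0 : 0 <= delta by rewrite le_min ler01 invr_ge0 !mulr_ge0 // ltW.
have delta_le1 : delta <= 1 by rewrite ge_min lexx.
have delta_le : delta <= (2 * eta * L)^-1 by rewrite ge_min lexx orbT.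
exact: (step_inequality xs eta_gt0 tau_gt0 tau_lt1 (step_xg k) (step_x k) (step_xf k)
  gF_grad gF_smooth convexF mu_gt0 mu_le_L alpha_gt0 alpha_le eta_le
  delta_ge0 delta_le1 delta_le).
Qed.
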